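(* Let $X$ be a space with a map $T:X\to X$ and a (not necessarily invariant) reference probability measure $\mu$, and let $\alpha=\{A_1,\dots,A_r\}$ be a finite measurable partition of $X$. For every recursive reversible compression algorithm $Z$ on the alphabet $\{1,\dots,r\}$, $q_Z(X,T,\alpha)\ge q_{AIC}(X,T,\alpha)$.
   Context: $\varphi_\alpha(x)=\omega\in\{1,\dots,r\}^{\mathbb{N}}$ is defined by $T^j(x)\in A_{\omega_j}$ for all $j$; $\Omega_\alpha=\varphi_\alpha(X)$ and $\mu_\alpha$ is the measure on $\Omega_\alpha$ defined on cylinders by $\mu_\alpha(\{\bar\omega:\bar\omega_i=\omega_i, k\le i\le n-1\})=\mu(\bigcap_{i=k}^{n-1}T^{-i}A_{\omega_i})$. A recursive reversible compression algorithm is an injective recursive map $Z$ from finite strings to binary strings, $I_Z(s)=|Z(s)|$; $AIC(s)=\min\{|P|:C(P)=s\}$ for a fixed universal computing machine $C$. For $I\in\{AIC,I_Z\}$, $I(x,\alpha,n)=I(\omega^n)$ with $\omega=\varphi_\alpha(x)$ and $\omega^n$ its first $n$ symbols, and the $q$-entropy relative to $\alpha$ is $h^q(X,\alpha)=\limsup_{n\to\infty}\int_{\Omega_\alpha}\frac{I(\omega^n)}{n^q}\,d\mu_\alpha(\omega)$. The intermittent chaos index is $q(X,T,\alpha)=\inf\{p>0:h^p(X,\alpha)=0\}$; $q_{AIC}$, $q_Z$ are this index for $I=AIC$, $I=I_Z$. *)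

From HB Require Import structures.
From mathcomp Require Import all_boot all_order all_algebra.
From mathcomp Require Import all_classical all_reals all_analysis.
Set Implicit Arguments. Unset Strict Implicit. Unset Printing Implicit Defensive.
Import Order.TTheory GRing.Theory Num.Theory.
Local Open Scope classical_set_scope.
Local Open Scope ring_scope.

Inductive code : Type :=
| CZero | CSucc | CProj of nat
| CComp of code & seq code
| CPrec of code & code
| CMu of code.

Inductive eval : code -> seq nat -> nat -> Prop :=
| eZero v : eval CZero v 0
| eSucc x v : eval CSucc (x :: v) x.+1
| eProj i v : (i < size v)%N -> eval (CProj i) v (nth 0%N v i)
| eComp f gs v ys y : evals gs v ys -> eval f ys y -> eval (CComp f gs) v y
| ePrec0 f g v y : eval f v y -> eval (CPrec f g) (0%N :: v) y
| ePrecS f g n v r y : eval (CPrec f g) (n :: v) r ->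
    eval g (n :: r :: v) y -> eval (CPrec f g) (n.+1 :: v) y
| eMu f v n : eval f (n :: v) 0 ->
    (forall m, (m < n)%N -> exists k, eval f (m :: v) k.+1) -> eval (CMu f) v n
with evals : seq code -> seq nat -> seq nat -> Prop :=
| esNil v : evals [::] v [::]
| esCons g gs v y ys : eval g v y -> evals gs v ys -> evals (g :: gs) v (y :: ys).

Definition partial_recursive (A B : countType) (f : A -> option B) : Prop :=
  exists c : code, forall (a : A) (y : nat),
    eval c [:: pickle a] y <-> exists b, f a = Some b /\ y = pickle b.

Definition recursive (A B : countType) (f : A -> B) : Prop :=
  partial_recursive (fun a => Some (f a)).

(* Strings over the alphabet {1,...,r} are represented as seq 'I_r. *)
Definition word (r : nat) := seq 'I_r.

Definition computing_machine (r : nat) (M : seq bool -> option (word r)) : Prop :=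
  partial_recursive M.

Definition universal_machine (r : nat) (C : seq bool -> option (word r)) : Prop :=
  computing_machine C /\
  forall M : seq bool -> option (word r), computing_machine M ->
    exists c : nat, forall P s, M P = Some s ->
      exists P', C P' = Some s /\ (size P' <= size P + c)%N.

Definition compression_algorithm (r : nat) (Z : word r -> seq bool) : Prop :=
  injective Z /\ recursive Z.

Definition AIC (R : realType) (r : nat) (C : seq bool -> option (word r))
  (s : word r) : \bar R :=
  ereal_inf [set ((size P)%:R)%:E | P in [set P | C P = Some s]].

Definition I_Z (R : realType) (r : nat) (Z : word r -> seq bool)
  (s : word r) : \bar R := ((size (Z s))%:R)%:E.

Definition is_partition (d : measure_display) (X : measurableType d) (r : nat)
  (A : 'I_r -> set X) : Prop :=
  (forall i, measurable (A i)) /\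
  (forall i j, i != j -> A i `&` A j = set0) /\
  \bigcup_(i in [set: 'I_r]) A i = setT.

(* The cylinder { omega : omega_i = w_i, 0 <= i < n } pulled back to X:
   \bigcap_{i<n} T^{-i} A_{w_i}; mu_alpha of the cylinder is mu of this set. *)
Definition cylinder (d : measure_display) (X : measurableType d) (T : X -> X)
  (r : nat) (A : 'I_r -> set X) (n : nat) (w : n.-tuple 'I_r) : set X :=
  \bigcap_(i in [set: 'I_n]) ((iter i T) @^-1` (A (tnth w i))).

(* \int_{Omega_alpha} I(omega^n) d mu_alpha(omega): the integrand depends only
   on the first n symbols, so this is the sum over cylinders of length n. *)
Definition mean_info (R : realType) (d : measure_display) (X : measurableType d)
  (mu : probability X R) (T : X -> X) (r : nat) (A : 'I_r -> set X)
  (I : word r -> \bar R) (n : nat) : \bar R :=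
  (\sum_(w : n.-tuple 'I_r) (I (tval w) * mu (cylinder T A w)))%E.

Definition q_entropy (R : realType) (d : measure_display) (X : measurableType d)
  (mu : probability X R) (T : X -> X) (r : nat) (A : 'I_r -> set X)
  (I : word r -> \bar R) (q : R) : \bar R :=
  limn_esup (fun n : nat =>
    (mean_info mu T A I n * ((n%:R `^ q)^-1)%:E)%E).

Definition chaos_index (R : realType) (d : measure_display) (X : measurableType d)
  (mu : probability X R) (T : X -> X) (r : nat) (A : 'I_r -> set X)
  (I : word r -> \bar R) : \bar R :=
  ereal_inf [set p%:E | p in [set p : R | 0 < p /\ q_entropy mu T A I p = 0%E]].

From Pilot Require Import Defs.
From HB Require Import structures.
From mathcomp Require Import all_boot all_order all_algebra.
From mathcomp Require Import all_classical all_reals all_analysis.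
From mathcomp Require Import zify.
Import Order.TTheory GRing.Theory Num.Theory.
(* Re-imported because MathComp-Analysis also exports a [code] and an [eval]. *)
Import Defs.

(* The decompressor of [Z], mapping [Z s] back to [s], is partial recursive: on
   input [P] it searches for the least number [k] that codes a word [w] with
   [Z w = P], which is effective because it is decidable whether [k] codes a word
   over [{1, ..., r}] and because [Z] is injective and recursive. Universality of
   [C] then gives [AIC(s) <= |Z(s)| + c] for a constant [c]. The cylinders of
   length [n] have total measure at most 1, so the mean information contents obey
   the same bound; after division by [n^p], [p > 0], the constant vanishes in the
   limit. Hence [h^p] for [AIC] is 0 whenever [h^p] for [Z] is, and the infimum
   defining [q_AIC] is taken over a larger set. *)

Definition returns (c : code) (v : seq nat) (z : nat) :=
  forall y, eval c v y <-> y = z.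

Definition returns_all (gs : seq code) (v zs : seq nat) :=
  forall ys, evals gs v ys <-> ys = zs.

Lemma returns_all_nil v : returns_all [::] v [::].
Proof.
by move=> ys; split=> [H|->]; [inversion H | constructor].
Qed.

Lemma returns_all_cons {g gs v z zs} :
  returns g v z -> returns_all gs v zs -> returns_all (g :: gs) v (z :: zs).
Proof.
move=> Hg Hgs ys; split=> [H|->]; last by constructor; [apply/Hg | apply/Hgs].
by inversion H; subst; congr cons; [apply/Hg | apply/Hgs].
Qed.

Lemma returns_zero v : returns CZero v 0.
Proof. by move=> y; split=> [H|->]; [inversion H | constructor]. Qed.

Lemma returns_succ x v : returns CSucc (x :: v) x.+1.
Proof. by move=> y; split=> [H|->]; [inversion H | constructor]. Qed.

Lemma returns_proj {i v} : i < size v -> returns (CProj i) v (nth 0 v i).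
Proof. by move=> Hi y; split=> [H|->]; [inversion H | constructor]. Qed.

Lemma returns_comp {f gs v zs z} :
  returns_all gs v zs -> returns f zs z -> returns (CComp f gs) v z.
Proof.
move=> Hgs Hf y; split=> [H|->]; last by econstructor; [apply/Hgs | apply/Hf].
have [ys /Hgs -> Hy] : exists2 ys, evals gs v ys & eval f ys y.
  by inversion H; exists ys.
exact/Hf.
Qed.

Lemma returns_prec0 {f g v z} : returns f v z -> returns (CPrec f g) (0 :: v) z.
Proof.
by move=> Hf y; split=> [H|->]; [inversion H; apply/Hf | constructor; apply/Hf].
Qed.

Lemma returns_precS {f g n v z y} :
  returns (CPrec f g) (n :: v) z -> returns g (n :: z :: v) y ->
  returns (CPrec f g) (n.+1 :: v) y.
Proof.
move=> Hn Hg y'; split=> [H|->]; last by econstructor; [apply/Hn | apply/Hg].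
have [z' /Hn -> Hz'] : exists2 z', eval (CPrec f g) (n :: v) z' & eval g (n :: z' :: v) y'.
  by inversion H; exists r.
exact/Hg.
Qed.

Lemma eval_mu {f v} (F : nat -> nat) n :
  (forall m, returns f (m :: v) (F m)) ->
  eval (CMu f) v n <-> F n = 0 /\ forall m, m < n -> F m != 0.
Proof.
move=> Hf; split=> [H|[Fn0 Fpos]].
  have [Hn Hlt] : eval f (n :: v) 0 /\ forall m, m < n -> exists k, eval f (m :: v) k.+1.
    by inversion H.
  split=> [|m /Hlt [k /(Hf m) <-] //]; exact/esym/(Hf n).
constructor; first by apply/(Hf n).
by move=> m /Fpos Fm; exists (F m).-1; apply/(Hf m); rewrite prednK ?lt0n.
Qed.

Definition computes n c (f : seq nat -> nat) :=
  forall v, size v = n -> returns c v (f v).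

Definition computes_all n gs (fs : seq (seq nat -> nat)) :=
  forall v, size v = n -> returns_all gs v [seq f v | f <- fs].

Lemma computes_ext {n c f} g :
  computes n c f -> (forall v, size v = n -> f v = g v) -> computes n c g.
Proof. by move=> Hf Efg v Hv; rewrite -Efg //; exact: Hf. Qed.

Lemma computes_all_nil n : computes_all n [::] [::].
Proof. by move=> v _; exact: returns_all_nil. Qed.

Lemma computes_all_cons {n g gs f fs} :
  computes n g f -> computes_all n gs fs -> computes_all n (g :: gs) (f :: fs).
Proof. by move=> Hg Hgs v Hv; apply: returns_all_cons; [exact: Hg | exact: Hgs]. Qed.

Lemma computes_zero {n} : computes n CZero (fun=> 0).
Proof. by move=> v _; exact: returns_zero. Qed.

Lemma computes_succ : computes 1 CSucc (fun v => (head 0 v).+1).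
Proof. by case=> [|x [|]] // _; exact: returns_succ. Qed.

Lemma computes_proj {n} i : i < n -> computes n (CProj i) (nth 0 ^~ i).
Proof. by move=> Hi v Hv; apply: returns_proj; rewrite Hv. Qed.

Lemma computes_comp {m n f F gs Gs} : computes m f F -> computes_all n gs Gs ->
  size Gs = m -> computes n (CComp f gs) (fun v => F [seq G v | G <- Gs]).
Proof.
move=> Hf Hgs HGs v Hv; apply: returns_comp (Hgs v Hv) _.
by apply: Hf; rewrite size_map.
Qed.

Lemma computes_comp1 {n f F g G} : computes 1 f F -> computes n g G ->
  computes n (CComp f [:: g]) (fun v => F [:: G v]).
Proof.
move=> Hf Hg; exact: (computes_comp Hf (computes_all_cons Hg (computes_all_nil _)) erefl).
Qed.

Lemma computes_comp2 {n f F g1 G1 g2 G2} :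
  computes 2 f F -> computes n g1 G1 -> computes n g2 G2 ->
  computes n (CComp f [:: g1; g2]) (fun v => F [:: G1 v; G2 v]).
Proof.
move=> Hf Hg1 Hg2.
exact: (computes_comp Hf
  (computes_all_cons Hg1 (computes_all_cons Hg2 (computes_all_nil _))) erefl).
Qed.

Lemma computes_prec {n f g F G H} : computes n f F -> computes n.+2 g G ->
  (forall v, H (0 :: v) = F v) ->
  (forall k v, H (k.+1 :: v) = G [:: k, H (k :: v) & v]) ->
  computes n.+1 (CPrec f g) H.
Proof.
move=> Hf Hg H0 HS [|k v] //= [Hv].
elim: k => [|k IHk]; first by rewrite H0; apply: returns_prec0; exact: Hf.
by rewrite HS; apply: returns_precS IHk _; apply: Hg; rewrite /= Hv.
Qed.

Fixpoint const_code (n : nat) : code :=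
  if n is n'.+1 then CComp CSucc [:: const_code n'] else CZero.

Lemma computes_const {m} n : computes m (const_code n) (fun=> n).
Proof.
elim: n => [|n IHn]; first exact: computes_zero.
exact: computes_comp1 computes_succ IHn.
Qed.

Definition pred_code := CPrec CZero (CProj 0).

Lemma computes_pred : computes 1 pred_code (fun v => (head 0 v).-1).
Proof. exact: computes_prec (@computes_zero 0) (computes_proj (n := 2) 0 isT) _ _. Qed.

Definition iter_code s := CPrec (CProj 0) (CComp s [:: CProj 1]).

Lemma computes_iter {s} h : computes 1 s (fun v => h (head 0 v)) ->
  computes 2 (iter_code s) (fun v => iter (nth 0 v 0) h (nth 0 v 1)).
Proof.
move=> Hs; exact: computes_prec (computes_proj (n := 1) 0 isT)
  (computes_comp1 Hs (computes_proj (n := 3) 1 isT)) _ _.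
Qed.

Definition add_code := iter_code CSucc.

Lemma computes_add : computes 2 add_code (fun v => nth 0 v 0 + nth 0 v 1).
Proof.
apply: computes_ext (computes_iter S computes_succ) _ => v _.
by rewrite iter_succn addnC.
Qed.

Definition sub_code := CComp (iter_code pred_code) [:: CProj 1; CProj 0].

Lemma computes_sub : computes 2 sub_code (fun v => nth 0 v 0 - nth 0 v 1).
Proof.
apply: computes_ext (computes_comp2 (computes_iter predn computes_pred)
  (computes_proj (n := 2) 1 isT) (computes_proj (n := 2) 0 isT)) _ => v _ /=.
by elim: (nth 0 v 1) => [|k /= ->]; rewrite ?subn0 ?subnS.
Qed.

Definition dist_code :=
  CComp add_code [:: sub_code; CComp sub_code [:: CProj 1; CProj 0]].

Lemma computes_dist : computes 2 dist_code (fun v => `|nth 0 v 0 - nth 0 v 1|).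
Proof.
apply: computes_ext (computes_comp2 computes_add computes_sub (computes_comp2 computes_sub
  (computes_proj (n := 2) 1 isT) (computes_proj (n := 2) 0 isT))) _ => v _ /=.
case: (leqP (nth 0 v 0) (nth 0 v 1)) => [le_01 | /ltnW le_10].
  by rewrite distnEr // (eqnP le_01).
by rewrite distnEl // (eqnP le_10) addn0.
Qed.

Definition iszero_code := CComp sub_code [:: const_code 1; CProj 0].

Lemma computes_iszero : computes 1 iszero_code (fun v => head 0 v == 0).
Proof.
apply: computes_ext
  (computes_comp2 computes_sub (computes_const 1) (computes_proj (n := 1) 0 isT)) _.
by case=> [|[|x] []].
Qed.

Definition eqn_code := CComp iszero_code [:: dist_code].

Lemma computes_eqn : computes 2 eqn_code (fun v => nth 0 v 0 == nth 0 v 1).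
Proof.
apply: computes_ext (computes_comp1 computes_iszero computes_dist) _ => v _.
by rewrite /= distn_eq0.
Qed.

Definition pos_code := CComp iszero_code [:: iszero_code].

Lemma computes_pos : computes 1 pos_code (fun v => 0 < head 0 v).
Proof.
apply: computes_ext (computes_comp1 computes_iszero computes_iszero) _.
by case=> [|[|x] []].
Qed.

Definition min_code := CComp sub_code [:: CProj 0; sub_code].

Lemma computes_min : computes 2 min_code (fun v => minn (nth 0 v 0) (nth 0 v 1)).
Proof.
apply: computes_ext
  (computes_comp2 computes_sub (computes_proj (n := 2) 0 isT) computes_sub) _.
move=> v _ /=; lia.
Qed.

(* Recursion [k.+1./2 = k - k./2]. *)
Definition half_code := CPrec CZero (CComp sub_code [:: CProj 0; CProj 1]).

Lemma computes_half : computes 1 half_code (fun v => (head 0 v)./2).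
Proof.
apply: computes_prec (@computes_zero 0)
  (computes_comp2 computes_sub (computes_proj (n := 2) 0 isT) (computes_proj (n := 2) 1 isT))
  _ _ => // k v /=.
rewrite -[in LHS](odd_double_half k) uphalf_half -addnn; lia.
Qed.

Definition double_code := CComp add_code [:: CProj 0; CProj 0].

Lemma computes_double : computes 1 double_code (fun v => (head 0 v).*2).
Proof.
apply: computes_ext (computes_comp2 computes_add
  (computes_proj (n := 1) 0 isT) (computes_proj (n := 1) 0 isT)) _.
by move=> v _; rewrite addnn.
Qed.

Definition halves_code := iter_code half_code.

Lemma computes_halves :
  computes 2 halves_code (fun v => nth 0 v 1 %/ 2 ^ nth 0 v 0).
Proof.
apply: computes_ext (computes_iter half computes_half) _ => v _.
elim: (nth 0 v 0) => [|i /= ->]; first by rewrite divn1.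
by rewrite -divn2 expnSr divnMA.
Qed.

Definition doubles_code := iter_code double_code.

Lemma computes_doubles :
  computes 2 doubles_code (fun v => nth 0 v 1 * 2 ^ nth 0 v 0).
Proof.
apply: computes_ext (computes_iter double computes_double) _ => v _.
elim: (nth 0 v 0) => [|i /= ->]; first by rewrite muln1.
by rewrite expnSr mulnA muln2.
Qed.

(* [CodeSeq.code (x :: s) = 2 ^ x * (CodeSeq.code s).*2.+1]: an entry [x >= r]
   of [s] shows up as a nonzero suffix [k %/ 2 ^ i] of its code [k] with at least
   [r] trailing zero bits. *)
Definition long_zero_run r y := (0 < y) && (2 ^ r %| y).

Definition word_code r k := [forall i : 'I_k, ~~ long_zero_run r (k %/ 2 ^ i)].

Definition no_long_run r k := forall i, ~~ long_zero_run r (k %/ 2 ^ i).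

Lemma long_zero_run_lt r k i : long_zero_run r (k %/ 2 ^ i) -> i < k.
Proof.
case/andP; rewrite divn_gt0 ?expn_gt0 // => le_2i_k _.
exact: leq_trans (ltn_expl i (isT : 1 < 2)) le_2i_k.
Qed.

Lemma word_code_no_long_run r k : reflect (no_long_run r k) (word_code r k).
Proof.
apply: (iffP forallP) => [noRun i | noRun i //].
by apply/negP => /[dup] /long_zero_run_lt lt_ik; apply/negP/(noRun (Ordinal lt_ik)).
Qed.

Lemma code_cons_div_small x s i : i <= x ->
  CodeSeq.code (x :: s) %/ 2 ^ i = 2 ^ (x - i) * (CodeSeq.code s).*2.+1.
Proof.
move=> le_ix; rewrite /= -{1}(subnK le_ix) expnD mulnAC.
by rewrite mulnK ?expn_gt0.
Qed.

Lemma code_cons_div_large x s j :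
  CodeSeq.code (x :: s) %/ 2 ^ (x.+1 + j) = CodeSeq.code s %/ 2 ^ j.
Proof.
rewrite /= expnD expnSr !divnMA [_ * _.+1]mulnC mulnK ?expn_gt0 // divn2.
by rewrite -[in RHS](uphalf_double (CodeSeq.code s)).
Qed.

Lemma no_long_run_cons r x s :
  no_long_run r (CodeSeq.code (x :: s)) <-> x < r /\ no_long_run r (CodeSeq.code s).
Proof.
have oddDbl : coprime (2 ^ _) (CodeSeq.code s).*2.+1.
  by move=> e; rewrite coprimeXl // coprime2n /= odd_double.
split=> [noRun | [lt_xr noRun] i].
  split=> [|j]; last by rewrite -(code_cons_div_large x); exact: noRun.
  move: (noRun 0); rewrite code_cons_div_small // /long_zero_run muln_gt0 expn_gt0 /=.
  by rewrite Gauss_dvdl // dvdn_Pexp2l // subn0 ltnNge.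
case: (leqP i x) => [le_ix | lt_xi].
  rewrite code_cons_div_small // /long_zero_run Gauss_dvdl // dvdn_Pexp2l //.
  by apply/negP => /andP [_]; lia.
by rewrite -(subnKC lt_xi) code_cons_div_large.
Qed.

Lemma no_long_run_code r s : no_long_run r (CodeSeq.code s) <-> all (fun x => x < r) s.
Proof.
elim: s => [|x s IHs]; first by split=> // _ i; rewrite div0n.
by rewrite no_long_run_cons /= IHs; split=> [[-> ->]|/andP].
Qed.

Lemma word_codeP r k : reflect (exists w : word r, pickle w = k) (word_code r k).
Proof.
apply: (iffP (word_code_no_long_run r k)) => [noRun | [w <-]].
  rewrite -(CodeSeq.decodeK k) in noRun *.
  move/no_long_run_code: noRun => allRange.
  exists (pmap insub (CodeSeq.decode k)); congr CodeSeq.code.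
  rewrite (pmap_filter (@insubK _ _ _)); apply/all_filterP.
  by apply: sub_all allRange => x /= lt_xr; rewrite insubT.
apply/(no_long_run_code r (map val w)); rewrite all_map.
by apply/allP => i _ /=.
Qed.

Definition long_run_code r :=
  CComp min_code [:: pos_code; CComp eqn_code [:: CProj 0;
    CComp doubles_code [:: const_code r; CComp halves_code [:: const_code r; CProj 0]]]].

Lemma computes_long_run r :
  computes 1 (long_run_code r) (fun v => long_zero_run r (head 0 v)).
Proof.
apply: computes_ext (computes_comp2 computes_min computes_pos
  (computes_comp2 computes_eqn (computes_proj (n := 1) 0 isT)
  (computes_comp2 computes_doubles (computes_const r)
  (computes_comp2 computes_halves (computes_const r) (computes_proj (n := 1) 0 isT))))) _.
move=> v _ /=; rewrite /long_zero_run dvdn_eq eq_sym.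
by case: (0 < _); case: (_ == _).
Qed.

Definition count_runs_code r := CPrec CZero (CComp add_code [:: CProj 1;
  CComp (long_run_code r) [:: CComp halves_code [:: CProj 0; CProj 2]]]).

Lemma computes_count_runs r : computes 2 (count_runs_code r)
  (fun v => \sum_(i < nth 0 v 0) long_zero_run r (nth 0 v 1 %/ 2 ^ i)).
Proof.
apply: computes_prec.
- exact: (@computes_zero 1).
- exact: (computes_comp2 computes_add
  (computes_proj (n := 3) 1 isT) (computes_comp1 (computes_long_run r)
  (computes_comp2 computes_halves
    (computes_proj (n := 3) 0 isT) (computes_proj (n := 3) 2 isT)))).
- by move=> v; rewrite big_ord0.
by move=> k v; rewrite big_ord_recr.
Qed.

Definition word_code_prog r :=
  CComp iszero_code [:: CComp (count_runs_code r) [:: CProj 0; CProj 0]].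

Lemma computes_word_code r :
  computes 1 (word_code_prog r) (fun v => word_code r (head 0 v)).
Proof.
apply: computes_ext (computes_comp1 computes_iszero (computes_comp2 (computes_count_runs r)
  (computes_proj (n := 1) 0 isT) (computes_proj (n := 1) 0 isT))) _.
move=> v _ /=; rewrite sum_nat_eq0.
by apply: congr1; apply: eq_forallb => i; rewrite eqb0.
Qed.

Definition partial_inverse {A B : Type} (f : A -> B) (b : B) : option A :=
  if pselect (exists a, f a = b) is left ex then Some (projT1 (cid ex)) else None.

Lemma partial_inverseP {A B : Type} (f : A -> B) b a :
  injective f -> partial_inverse f b = Some a <-> f a = b.
Proof.
move=> f_inj; rewrite /partial_inverse; case: pselect => [ex|noPre].
  by case: (cid ex) => a' /= <-; split=> [[<-]|/f_inj ->].
by split=> // fa_b; case: noPre; exists a.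
Qed.

Lemma recursive_returns (A B : countType) (f : A -> B) :
  recursive f -> exists c, forall a, returns c [:: pickle a] (pickle (f a)).
Proof.
case=> c Hc; exists c => a y; rewrite Hc.
by split=> [[_ [[<-] ->]] | ->]; last exists (f a).
Qed.

Lemma pickle_invP (A : countType) k (a : A) : pickle_inv k = Some a <-> pickle a = k.
Proof.
split=> [Ek | <-]; last exact: pickleK_inv.
by have := @pickle_invK A k; rewrite Ek.
Qed.

(* [c] may diverge on numbers that code no element of its domain, so it only runs
   under a primitive recursion whose counter is the bit [dom k]. *)
Definition inverse_test dom c :=
  CComp (CPrec (const_code 1) (CComp dist_code [:: CComp c [:: CProj 2]; CProj 3]))
    [:: CComp dom [:: CProj 0]; CProj 0; CProj 1].

Section PartialRecursiveInverse.
Context {A B : countType} {f : A -> B} {dom c : code}.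
Hypothesis f_inj : injective f.
Hypothesis c_f : forall a, returns c [:: pickle a] (pickle (f a)).
Hypothesis dom_codes : computes 1 dom (fun v => isSome (pickle_inv (head 0 v) : option A)).

Definition inverse_test_value (b : B) k :=
  if (pickle_inv k : option A) is Some a then `|pickle (f a) - pickle b| else 1.

Lemma returns_inverse_test b k :
  returns (inverse_test dom c) [:: k; pickle b] (inverse_test_value b k).
Proof.
have dom_k := computes_comp1 dom_codes (computes_proj (n := 2) 0 isT) [:: k; pickle b] erefl.
apply: (returns_comp (zs := [:: isSome (pickle_inv k : option A) : nat; k; pickle b])).
  by apply: returns_all_cons dom_k
    (returns_all_cons (returns_proj _) (returns_all_cons (returns_proj _) (returns_all_nil _))).
have returns_one v : returns (CPrec (const_code 1) (CComp dist_code
    [:: CComp c [:: CProj 2]; CProj 3])) (0 :: v) 1.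
  exact/returns_prec0/computes_const.
rewrite /inverse_test_value; case Ek: (pickle_inv k) => [a|] //=.
apply: returns_precS (returns_one _) _.
move/pickle_invP: Ek => <-.
apply: (returns_comp (zs := [:: pickle (f a); pickle b])); last exact: computes_dist.
apply: returns_all_cons (returns_all_cons (returns_proj _) (returns_all_nil _)) => //.
apply: (returns_comp (zs := [:: pickle a])) (c_f a).
by apply: returns_all_cons (returns_proj _) (returns_all_nil _).
Qed.

Lemma inverse_test_value_eq0 b k :
  (inverse_test_value b k == 0) = (omap f (pickle_inv k) == Some b).
Proof.
rewrite /inverse_test_value; case: (pickle_inv k) => [a|] //=.
by rewrite distn_eq0 (inj_eq (pcan_inj (@pickleK_inv B))).
Qed.

Lemma partial_recursive_inverse : partial_recursive (partial_inverse f).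
Proof.
exists (CMu (inverse_test dom c)) => b y.
rewrite (eval_mu _ _ (returns_inverse_test b)); split.
  case=> /eqP; rewrite inverse_test_value_eq0.
  case Ey: (pickle_inv y) => [a|] //= /eqP [fa_b] _.
  by exists a; split; [exact/partial_inverseP | exact/esym/pickle_invP].
case=> a [/partial_inverseP -/(_ f_inj) fa_b ->]; split.
  by apply/eqP; rewrite inverse_test_value_eq0 pickleK_inv /= fa_b.
move=> m lt_m_a; rewrite inverse_test_value_eq0.
case Em: (pickle_inv m) => [a'|] //=; apply/eqP => -[fa'_b].
move: fa'_b; rewrite -fa_b => /f_inj a'_a.
by move/pickle_invP: Em lt_m_a => <-; rewrite a'_a ltnn.
Qed.
End PartialRecursiveInverse.

Lemma word_code_pickle_inv r k : word_code r k = isSome (pickle_inv k : option (word r)).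
Proof.
case Ek: (pickle_inv k) => [w|]; apply/word_codeP.
  by exists w; apply/pickle_invP.
by case=> w /pickle_invP; rewrite Ek.
Qed.

Lemma computing_machine_partial_inverse {r} {Z : word r -> seq bool} :
  compression_algorithm Z -> computing_machine (partial_inverse Z).
Proof.
case=> Z_inj /recursive_returns [c c_Z].
apply: (partial_recursive_inverse Z_inj c_Z (dom := word_code_prog r)).
by apply: computes_ext (computes_word_code r) _ => v _; rewrite word_code_pickle_inv.
Qed.

Import numFieldTopology.Exports numFieldNormedType.Exports.
Local Open Scope classical_set_scope.
Local Open Scope ring_scope.

Lemma AIC_ge0 (R : realType) r (C : seq bool -> option (word r)) s : (0 <= AIC R C s)%E.
Proof. by apply: le_ereal_inf_tmp => _ [P _ <-]; rewrite lee_fin ler0n. Qed.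

Lemma AIC_le_I_Z (R : realType) {r}
    {C : seq bool -> option (word r)} {Z : word r -> seq bool} :
  universal_machine C -> compression_algorithm Z ->
  exists c : nat, forall s, (AIC R C s <= I_Z R Z s + c%:R%:E)%E.
Proof.
move=> [_ C_univ] Z_comp; have [Z_inj _] := Z_comp.
have [c Hc] := C_univ _ (computing_machine_partial_inverse Z_comp).
exists c => s; have [P [CP_s size_P]] := Hc (Z s) s ((partial_inverseP _ _ _ Z_inj).2 erefl).
apply: ge_ereal_inf; exists (size P)%:R%:E; first by exists P.
by rewrite /I_Z -EFinD lee_fin -natrD ler_nat.
Qed.

Lemma cvg_inv_natpowR {R : realType} {p : R} :
  0 < p -> (n%:R `^ p)^-1 @[n --> \oo] --> 0.
Proof.
move=> p_gt0; rewrite -cvg_shiftS /=.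
have := (@cvg_at_rightP R (fun x => x `^ p) 0 0).1 (powR_cvg0 p_gt0) (@harmonic R)
  (conj (@harmonic_gt0 R) cvg_harmonic).
apply: cvg_trans; apply: near_eq_cvg; apply: nearW => n /=.
by rewrite -powRN -powR_inv1 ?ler0n // -powRrM mulN1r.
Qed.

Section MeanInformation.
Context {R : realType} {d : measure_display} {X : measurableType d}.
Context {mu : probability X R} {T : X -> X} {r : nat} {A : 'I_r -> set X}.
Hypothesis hT : measurable_fun setT T.
Hypothesis hA : is_partition A.

Lemma measurable_cylinder n (w : n.-tuple 'I_r) : measurable (cylinder T A w).
Proof.
have measurable_iter i : measurable_fun setT (iter i T).
  elim: i => [|i IHi]; [exact: measurable_id | exact: measurableT_comp hT IHi].
apply: fin_bigcap_measurable; first exact: finite_finset.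
move=> i _; rewrite -[_ @^-1` _]setTI.
exact: (measurable_iter i measurableT _ (hA.1 _)).
Qed.

Lemma cylinder_disjoint n (w w' : n.-tuple 'I_r) x :
  cylinder T A w x -> cylinder T A w' x -> w = w'.
Proof.
move=> w_x w'_x; apply: eq_from_tnth => i; apply/eqP/negPn/negP => neq_ww'.
have : (A (tnth w i) `&` A (tnth w' i)) (iter i T x) by split; [exact: w_x | exact: w'_x].
by rewrite hA.2.1.
Qed.

Lemma sum_cylinder_le1 n : (\sum_(w : n.-tuple 'I_r) mu (cylinder T A w) <= 1)%E.
Proof.
rewrite -big_enum fsbig_seq ?enum_uniq //= -measure_fin_bigcup //.
- apply: probability_le1; apply: fin_bigcup_measurable => // w _.
  exact: measurable_cylinder.
- by move=> w w' _ _ [x [w_x w'_x]]; exact: cylinder_disjoint w_x w'_x.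
- by move=> w _; exact: measurable_cylinder.
Qed.

Lemma mean_info_ge0 (I : word r -> \bar R) n :
  (forall s, 0 <= I s)%E -> (0 <= mean_info mu T A I n)%E.
Proof.
by move=> I_ge0; apply: sume_ge0 => w _; apply: mule_ge0.
Qed.

Lemma mean_info_le_add (I J : word r -> \bar R) (c : R) n :
  0 <= c -> (forall s, 0 <= J s)%E -> (forall s, I s <= J s + c%:E)%E ->
  (mean_info mu T A I n <= mean_info mu T A J n + c%:E)%E.
Proof.
move=> c_ge0 J_ge0 I_le_J; rewrite /mean_info.
apply: (@le_trans _ _ (\sum_(w : n.-tuple 'I_r) ((J w + c%:E) * mu (cylinder T A w)))%E).
  by apply: lee_sum => w _; apply: lee_wpmul2r.
under eq_bigr do rewrite ge0_muleDl ?lee_fin //.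
rewrite big_split /=; apply: leeD => //.
rewrite -ge0_sume_distrr // -[leRHS]mule1.
by apply: lee_wpmul2l; [rewrite lee_fin | exact: sum_cylinder_le1].
Qed.



Lemma q_entropy_eq0P (I : word r -> \bar R) p : (forall s, 0 <= I s)%E ->
  q_entropy mu T A I p = 0%E <->
  (mean_info mu T A I n * ((n%:R `^ p)^-1)%:E)%E @[n --> \oo] --> 0%E.
Proof.
move=> I_ge0; split=> [h0|/cvg_limn_einf_sup[] //].
apply: limn_esup_le_cvg; first by rewrite [limn_esup _]h0.
by move=> n; apply: mule_ge0; [exact: mean_info_ge0 | rewrite lee_fin invr_ge0 powR_ge0].
Qed.

Lemma q_entropy_eq0_le_add {I J : word r -> \bar R} {c p : R} :
  0 < p -> 0 <= c -> (forall s, 0 <= I s)%E -> (forall s, 0 <= J s)%E ->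
  (forall s, I s <= J s + c%:E)%E ->
  q_entropy mu T A J p = 0%E -> q_entropy mu T A I p = 0%E.
Proof.
move=> p_gt0 c_ge0 I_ge0 J_ge0 I_le_J /(q_entropy_eq0P _ _ J_ge0) J0.
apply/(q_entropy_eq0P _ _ I_ge0).
have c0 : (c * (n%:R `^ p)^-1)%:E @[n --> \oo] --> 0%E.
  apply: cvg_EFin; first exact: nearW.
  by have := cvgMl_tmp (a := c) (cvg_inv_natpowR p_gt0); rewrite mulr0; apply.
apply: (@squeeze_cvge _ _ _ _ (cst 0%E) _
  (fun n => mean_info mu T A J n * ((n%:R `^ p)^-1)%:E + (c * (n%:R `^ p)^-1)%:E)%E).
- apply: nearW => n; have n_ge0 : 0 <= (n%:R `^ p)^-1 :> R by rewrite invr_ge0 powR_ge0.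
  apply/andP; split; first by apply: mule_ge0; [exact: mean_info_ge0 | rewrite lee_fin].
  rewrite EFinM -ge0_muleDl ?lee_fin //; last exact: mean_info_ge0.
  by apply: lee_wpmul2r; [rewrite lee_fin | exact: mean_info_le_add].
- exact: cvg_cst.
- by rewrite -[0%E]adde0; apply: cvgeD.
Qed.

Lemma le_chaos_index {I J : word r -> \bar R} :
  (forall p, 0 < p -> q_entropy mu T A J p = 0%E -> q_entropy mu T A I p = 0%E) ->
  (chaos_index mu T A I <= chaos_index mu T A J)%E.
Proof.
move=> JI; apply: ereal_inf_le_tmp => _ [p [p_gt0 Jp] <-].
by exists p => //; split => //; exact: JI.
Qed.

End MeanInformation.

Theorem corollary5p7 (R : realType) (d : measure_display) (X : measurableType d)
  (mu : probability X R) (T : X -> X) (hT : measurable_fun setT T)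
  (r : nat) (A : 'I_r -> set X) (hA : is_partition A)
  (C : seq bool -> option (word r)) (hC : universal_machine C)
  (Z : word r -> seq bool) (hZ : compression_algorithm Z) :
  (chaos_index mu T A (AIC R C) <= chaos_index mu T A (I_Z R Z))%E.
Proof.
have [c AIC_le] := AIC_le_I_Z R hC hZ.
have I_Z_ge0 s : (0 <= I_Z R Z s)%E by rewrite lee_fin ler0n.
apply: le_chaos_index => p p_gt0.
exact: (q_entropy_eq0_le_add hT hA p_gt0 (ler0n _ c) (AIC_ge0 R r C) I_Z_ge0 AIC_le).
Qed.
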